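(* Let $\{x_i\}_{i\in[N]}$ be the global solution of the delayed consensus system described in the context. Then for almost all $t>2\tau$, \[ \frac{\mathrm d}{\mathrm dt}d_x(t)\le 4\int_{t-\tau}^t d_x(s-\tau)\,\mathrm ds+4\tau\int_{t-2\tau}^t\max_{l\in[N]}|\dot x_l(r)|\,\mathrm dr-N\underline a(t)d_x(t), \] where $\underline a(t):=\min_{i,j\in[N]}a_{ij}(t)$.
   Context: Let $N\ge2$, $d\ge1$ be integers, $[N]=\{1,\dots,N\}$, $0\le\sigma\le\tau$. Let $\psi:[0,\infty)\to[0,\infty)$ be continuous, nonincreasing, positive everywhere, with $\sup\psi\le1$. Given $x_i^0\in C([-\tau,0],\mathbb{R}^d)$, $\{x_i\}$ is the global solution (continuous on $[-\tau,\infty)$, continuously differentiable on $[0,\infty)$) of $\dot x_i(t)=\sum_{j\ne i}a_{ij}(t)(x_j(t-\tau)-x_i(t-\sigma))$ for $t>0$, with $a_{ij}(t)=\frac1{N-1}\psi(|x_i(t-\sigma)-x_j(t-\tau)|)$ for all $i,j\in[N]$, and $x_i=x_i^0$ on $[-\tau,0]$. $d_x(t):=\max_{i,j\in[N]}|x_i(t)-x_j(t)|$. *)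

From Stdlib Require Import Reals List.
From Coquelicot Require Import Coquelicot.

Local Open Scope R_scope.

Definition sumR (n : nat) (f : nat -> R) : R :=
  fold_right Rplus 0 (map f (List.seq 0 n)).

(* max / min over k = 0, ..., n-1 (meaningful for n >= 1) *)
Definition maxR (n : nat) (f : nat -> R) : R :=
  fold_right Rmax (f 0%nat) (map f (List.seq 0 n)).
Definition minR (n : nat) (f : nat -> R) : R :=
  fold_right Rmin (f 0%nat) (map f (List.seq 0 n)).

Definition enorm (d : nat) (v : nat -> R) : R :=
  sqrt (sumR d (fun k => v k ^ 2)).

(* A trajectory: x i t k = k-th component of x_i(t), i in {0..N-1}, k in {0..d-1}. *)
Definition traj := nat -> R -> nat -> R.

Definition acoef (N d : nat) (psi : R -> R) (sigma tau : R) (x : traj)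
    (i j : nat) (t : R) : R :=
  / INR (N - 1) * psi (enorm d (fun k => x i (t - sigma) k - x j (t - tau) k)).

Definition amin (N d : nat) (psi : R -> R) (sigma tau : R) (x : traj) (t : R) : R :=
  minR N (fun i => minR N (fun j => acoef N d psi sigma tau x i j t)).

Definition dx (N d : nat) (x : traj) (t : R) : R :=
  maxR N (fun i => maxR N (fun j => enorm d (fun k => x i t k - x j t k))).

Definition maxvel (N d : nat) (x : traj) (r : R) : R :=
  maxR N (fun l => enorm d (fun k => Derive (fun s => x l s k) r)).

Definition rhs (N d : nat) (psi : R -> R) (sigma tau : R) (x : traj)
    (i : nat) (t : R) (k : nat) : R :=
  sumR N (fun j => if Nat.eqb j i then 0
                   else acoef N d psi sigma tau x i j t * (x j (t - tau) k - x i (t - sigma) k)).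

Definition is_solution (N d : nat) (psi : R -> R) (sigma tau : R) (x : traj) : Prop :=
  (forall i k, (i < N)%nat -> (k < d)%nat -> forall t, - tau <= t ->
     filterlim (fun s => x i s k) (within (fun s => - tau <= s) (locally t))
       (locally (x i t k))) /\
  (forall i k, (i < N)%nat -> (k < d)%nat -> forall t, 0 < t ->
     is_derive (fun s => x i s k) t (rhs N d psi sigma tau x i t k)).

From mathcomp Require Import all_boot all_algebra.
From mathcomp Require Import all_classical all_reals.
From mathcomp Require Import Rstruct Rstruct_topology measure lebesgue_measure.

Definition ae_R (P : R -> Prop) : Prop :=
  (@lebesgue_measure R).-negligible [set t | ~ P t].

(* At a time t where d_x(t) > 0 is attained by the pair (i, j), the derivative of d_x
   is the separation speed of x_i and x_j along e = (x_i - x_j) / d_x(t).  Each velocity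
   is a combination of delayed relative positions with weights in [a_min, 1/(N-1)];
   replacing delayed by current positions costs at most the displacement integral of
   max_l |x_l'| over [t - tau, t], and the current relative positions of the extremal
   agents all point inwards along e, which yields the damping term - N a_min d_x.
   Applying the equation once more bounds max_l |x_l'|(s) by
   d_x(s - tau) + int_{s - tau}^s max_l |x_l'|.
   The maximum d_x is differentiable at every t that is not a simple zero of a
   difference of squared pairwise distances nor of a coordinate difference; simple
   zeros are isolated, so these times form a countable, hence negligible, set. *)

From Stdlib Require Import Reals Lra Lia List.
From Coquelicot Require Import Coquelicot.
From mathcomp Require all_boot all_algebra all_classical all_reals Rstruct Rstruct_topology measure lebesgue_measure.
Open Scope R_scope.

Lemma sumR_0 f : sumR 0 f = 0.
Proof. reflexivity. Qed.

Lemma sumR_S n f : sumR (S n) f = sumR n f + f n.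
Proof.
  unfold sumR. rewrite seq_S, map_app, fold_right_app. simpl.
  induction (map f (seq 0 n)) as [|y l IH]; simpl; lra.
Qed.

Lemma sumR_ext n f g : (forall k, (k < n)%nat -> f k = g k) -> sumR n f = sumR n g.
Proof.
  induction n as [|n IH]; intros H; [reflexivity|].
  rewrite !sumR_S, IH, H; auto; lia.
Qed.

Lemma sumR_le n f g : (forall k, (k < n)%nat -> f k <= g k) -> sumR n f <= sumR n g.
Proof.
  induction n as [|n IH]; intros H; [rewrite !sumR_0; lra|].
  rewrite !sumR_S. apply Rplus_le_compat; [apply IH; intros|]; apply H; lia.
Qed.

Lemma sumR_plus n f g : sumR n (fun k => f k + g k) = sumR n f + sumR n g.
Proof. induction n as [|n IH]; [rewrite !sumR_0; lra|rewrite !sumR_S, IH; lra]. Qed.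

Lemma sumR_minus n f g : sumR n (fun k => f k - g k) = sumR n f - sumR n g.
Proof. induction n as [|n IH]; [rewrite !sumR_0; lra|rewrite !sumR_S, IH; lra]. Qed.

Lemma sumR_scal n c f : sumR n (fun k => c * f k) = c * sumR n f.
Proof. induction n as [|n IH]; [rewrite !sumR_0; lra|rewrite !sumR_S, IH; lra]. Qed.

Lemma sumR_const n c : sumR n (fun _ => c) = INR n * c.
Proof. induction n as [|n IH]; [rewrite sumR_0; simpl; lra|rewrite sumR_S, IH, S_INR; lra]. Qed.

Lemma sumR_nonneg n f : (forall k, (k < n)%nat -> 0 <= f k) -> 0 <= sumR n f.
Proof.
  intros H. rewrite <- (Rmult_0_r (INR n)), <- sumR_const. now apply sumR_le.
Qed.

Lemma sumR_swap n m (F : nat -> nat -> R) :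
  sumR n (fun k => sumR m (fun j => F j k)) = sumR m (fun j => sumR n (fun k => F j k)).
Proof.
  induction n as [|n IH].
  - rewrite sumR_0, <- (Rmult_0_r (INR m)), <- sumR_const. now apply sumR_ext.
  - rewrite sumR_S, IH, <- sumR_plus. apply sumR_ext. intros. now rewrite sumR_S.
Qed.

Lemma sumR_offdiag_one n i : (i < n)%nat ->
  sumR n (fun m => if Nat.eqb m i then 0 else 1) = INR n - 1.
Proof.
  induction n as [|n IH]; intros Hi; [lia|].
  rewrite sumR_S, S_INR. destruct (Nat.eqb_spec n i) as [->|E].
  - rewrite (sumR_ext _ _ (fun _ => 1)), sumR_const; [lra|].
    intros k Hk. destruct (Nat.eqb_spec k i); [lia|reflexivity].
  - rewrite IH by lia. lra.
Qed.

Lemma sumR_sq_eq0 n a : sumR n (fun k => a k ^ 2) = 0 -> forall k, (k < n)%nat -> a k = 0.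
Proof.
  induction n as [|n IH]; intros H k Hk; [lia|].
  rewrite sumR_S in H.
  assert (0 <= sumR n (fun k => a k ^ 2)) by (apply sumR_nonneg; intros; apply pow2_ge_0).
  pose proof (pow2_ge_0 (a n)).
  destruct (Nat.eq_dec k n) as [->|E]; [|apply IH; [lra|lia]].
  destruct (Req_dec (a n) 0) as [|E]; [assumption|].
  exfalso. apply (pow_nonzero _ 2 E). lra.
Qed.

Lemma maxR_closed (P : (R -> R) -> Prop) n (F : nat -> R -> R) :
  (forall u w, P u -> P w -> P (fun s => Rmax (u s) (w s))) ->
  (0 < n)%nat -> (forall k, (k < n)%nat -> P (F k)) -> P (fun s => maxR n (fun k => F k s)).
Proof.
  intros Hmax Hn HF. unfold maxR.
  assert (HL : forall k, In k (seq 0 n) -> P (F k)) by (intros k Hk; apply in_seq in Hk; apply HF; lia).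
  induction (seq 0 n) as [|a L IH]; simpl; [now apply HF|].
  apply Hmax; [apply HL; now left| apply IH; intros; apply HL; now right].
Qed.

Lemma maxR_ub n f k : (k < n)%nat -> f k <= maxR n f.
Proof.
  intros Hk. unfold maxR. assert (Hin : In (f k) (map f (seq 0 n))) by (apply in_map, in_seq; lia).
  induction (map f (seq 0 n)) as [|y L IH]; simpl in *; [tauto|].
  destruct Hin as [->|Hin]; [apply Rmax_l| eapply Rle_trans; [apply IH, Hin| apply Rmax_r]].
Qed.

Lemma maxR_nonneg n f : (0 < n)%nat -> (forall k, (k < n)%nat -> 0 <= f k) -> 0 <= maxR n f.
Proof. intros Hn H. eapply Rle_trans; [apply (H 0%nat Hn)| now apply maxR_ub]. Qed.

Lemma maxR_attained n f : (0 < n)%nat -> exists k, (k < n)%nat /\ maxR n f = f k.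
Proof.
  intros Hn. unfold maxR.
  assert (H : forall L, (forall y, In y L -> exists k, (k < n)%nat /\ y = f k) ->
            exists k, (k < n)%nat /\ fold_right Rmax (f 0%nat) L = f k).
  { induction L as [|y L IH]; intros HL; simpl; [now exists 0%nat|].
    apply Rmax_case; [apply HL; now left| apply IH; intros; apply HL; now right]. }
  apply H. intros y Hy. apply in_map_iff in Hy. destruct Hy as [k [<- Hk]].
  apply in_seq in Hk. exists k. split; [lia|reflexivity].
Qed.

Lemma maxR_ext n f g : (forall k, (k < n)%nat -> f k = g k) -> (0 < n)%nat -> maxR n f = maxR n g.
Proof.
  intros H Hn. unfold maxR. rewrite (H 0%nat Hn). f_equal.
  apply map_ext_in. intros a Ha. apply in_seq in Ha. apply H. lia.
Qed.

Lemma minR_lb n f k : (k < n)%nat -> minR n f <= f k.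
Proof.
  intros Hk. unfold minR. assert (Hin : In (f k) (map f (seq 0 n))) by (apply in_map, in_seq; lia).
  induction (map f (seq 0 n)) as [|y L IH]; simpl in *; [tauto|].
  destruct Hin as [->|Hin]; [apply Rmin_l| eapply Rle_trans; [apply Rmin_r| apply IH, Hin]].
Qed.

Definition dot (d : nat) (u v : nat -> R) : R := sumR d (fun k => u k * v k).

Lemma dot_ext d u u' v v' : (forall k, (k < d)%nat -> u k = u' k /\ v k = v' k) ->
  dot d u v = dot d u' v'.
Proof. intros H. apply sumR_ext. intros k Hk. now destruct (H k Hk) as [-> ->]. Qed.

Lemma dot_sym d u v : dot d u v = dot d v u.
Proof. apply sumR_ext. intros; ring. Qed.

Lemma dot_minus_r d w u v : dot d w (fun k => u k - v k) = dot d w u - dot d w v.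
Proof. unfold dot. rewrite <- sumR_minus. apply sumR_ext. intros; ring. Qed.

Lemma dot_scal_l d c w u : dot d (fun k => c * w k) u = c * dot d w u.
Proof. unfold dot. rewrite <- sumR_scal. apply sumR_ext. intros; ring. Qed.

Lemma dot_opp_l d w u : dot d (fun k => - w k) u = - dot d w u.
Proof.
  rewrite (dot_ext d _ (fun k => -1 * w k) u u) by (intros; split; ring).
  rewrite dot_scal_l. ring.
Qed.

Lemma dot_zero_l d u v : (forall k, (k < d)%nat -> u k = 0) -> dot d u v = 0.
Proof.
  intros H. rewrite (dot_ext d u (fun k => 0 * u k) v v) by (intros k Hk; rewrite H; auto with real).
  rewrite dot_scal_l. ring.
Qed.

Lemma enorm_dot d u : enorm d u = sqrt (dot d u u).
Proof. unfold enorm. f_equal. apply sumR_ext. intros; ring. Qed.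

Lemma enorm_nonneg d u : 0 <= enorm d u.
Proof. apply sqrt_pos. Qed.

Lemma enorm_sq d u : enorm d u * enorm d u = dot d u u.
Proof.
  rewrite enorm_dot. apply sqrt_sqrt. apply sumR_nonneg. intros. apply Rle_0_sqr.
Qed.

Lemma enorm_eq0 d u : enorm d u = 0 -> forall k, (k < d)%nat -> u k = 0.
Proof.
  intros H. apply sumR_sq_eq0.
  apply sqrt_eq_0; [apply sumR_nonneg; intros; apply pow2_ge_0| exact H].
Qed.

Lemma enorm_opp d u : enorm d (fun k => - u k) = enorm d u.
Proof. unfold enorm. f_equal. apply sumR_ext. intros; ring. Qed.

Lemma enorm_le_sum_abs d u : enorm d u <= sumR d (fun k => Rabs (u k)).
Proof.
  assert (Hs : forall n, 0 <= sumR n (fun k => Rabs (u k)))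
    by (intros n; apply sumR_nonneg; intros; apply Rabs_pos).
  unfold enorm. rewrite <- (sqrt_pow2 _ (Hs d)). apply sqrt_le_1_alt.
  induction d as [|n IH]; [rewrite !sumR_0; simpl; lra|].
  rewrite !sumR_S, <- (pow2_abs (u n)).
  pose proof (Hs n). pose proof (Rabs_pos (u n)). nra.
Qed.

Lemma dot_le_enorm d u v : dot d u v <= enorm d u * enorm d v.
Proof.
  destruct (Req_dec (enorm d u) 0) as [HA|HA].
  { rewrite dot_zero_l by (now apply enorm_eq0). rewrite HA. lra. }
  destruct (Req_dec (enorm d v) 0) as [HB|HB].
  { rewrite dot_sym, dot_zero_l by (now apply enorm_eq0). rewrite HB. lra. }
  pose proof (enorm_sq d u) as Hu. pose proof (enorm_sq d v) as Hv.
  pose proof (enorm_nonneg d u). pose proof (enorm_nonneg d v).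
  set (A := enorm d u) in *. set (B := enorm d v) in *.
  assert (Hexp : 0 <= B * B * dot d u u - 2 * (A * B) * dot d u v + A * A * dot d v v).
  { replace (B * B * dot d u u - 2 * (A * B) * dot d u v + A * A * dot d v v)
      with (dot d (fun k => B * u k - A * v k) (fun k => B * u k - A * v k)).
    - apply sumR_nonneg. intros. apply Rle_0_sqr.
    - unfold dot. rewrite <- !sumR_scal, <- sumR_minus, <- sumR_plus.
      apply sumR_ext. intros; ring. }
  rewrite <- Hu, <- Hv in Hexp.
  assert (Hpos : 0 < A * B) by (apply Rmult_lt_0_compat; lra).
  nra.
Qed.

Lemma Rabs_dot_le d u v : Rabs (dot d u v) <= enorm d u * enorm d v.
Proof.
  apply Rabs_le. split; [|apply dot_le_enorm].
  pose proof (dot_le_enorm d (fun k => - u k) v). rewrite dot_opp_l, enorm_opp in H. lra.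
Qed.

Lemma enorm_normalize d y : 0 < enorm d y ->
  enorm d (fun k => y k / enorm d y) = 1 /\ dot d (fun k => y k / enorm d y) y = enorm d y.
Proof.
  intros Hy. pose proof (enorm_sq d y) as Hsq.
  assert (Hscal : forall v, dot d (fun k => y k / enorm d y) v = / enorm d y * dot d y v).
  { intros v. rewrite <- dot_scal_l. apply dot_ext. intros; split; [unfold Rdiv; ring|reflexivity]. }
  split.
  - rewrite enorm_dot, Hscal, dot_sym, Hscal, <- Hsq.
    replace (/ enorm d y * (/ enorm d y * (enorm d y * enorm d y))) with 1 by (field; lra).
    apply sqrt_1.
  - rewrite Hscal, <- Hsq. field. lra.
Qed.

Lemma Rmax_half_sum a b : Rmax a b = / 2 * (a + b + Rabs (a - b)).
Proof.
  unfold Rmax. destruct (Rle_dec a b).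
  - rewrite Rabs_left1 by lra. lra.
  - rewrite Rabs_right by lra. lra.
Qed.

Lemma continuous_Rmax (f g : R -> R) t :
  continuous f t -> continuous g t -> continuous (fun s => Rmax (f s) (g s)) t.
Proof.
  intros Hf Hg. apply (continuous_ext (fun s => / 2 * (f s + g s + Rabs (f s - g s)))).
  { intros s. exact (eq_sym (Rmax_half_sum _ _)). }
  apply (continuous_mult (fun _ => / 2) (fun s => f s + g s + Rabs (f s - g s)));
    [apply continuous_const|].
  apply (continuous_plus (fun s => f s + g s) (fun s => Rabs (f s - g s)) t);
    [now apply (continuous_plus f g t)|].
  apply continuous_Rabs_comp. now apply (continuous_minus f g t).
Qed.

Lemma continuous_sumR n (F : nat -> R -> R) t :
  (forall k, (k < n)%nat -> continuous (F k) t) -> continuous (fun s => sumR n (fun k => F k s)) t.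
Proof.
  induction n as [|n IH]; intros H.
  - apply (continuous_ext (fun _ => 0)); [intros; reflexivity| apply continuous_const].
  - apply (continuous_ext (fun s => sumR n (fun k => F k s) + F n s)); [intros; now rewrite sumR_S|].
    apply (continuous_plus (fun s => sumR n (fun k => F k s)) (F n) t); [apply IH; intros|]; apply H; lia.
Qed.

Lemma continuous_maxR n (F : nat -> R -> R) t : (0 < n)%nat ->
  (forall k, (k < n)%nat -> continuous (F k) t) -> continuous (fun s => maxR n (fun k => F k s)) t.
Proof. apply (maxR_closed (fun u => continuous u t)). intros. now apply continuous_Rmax. Qed.

Lemma continuous_enorm d (F : nat -> R -> R) t : (forall k, (k < d)%nat -> continuous (F k) t) ->
  continuous (fun s => enorm d (fun k => F k s)) t.
Proof.
  intros H. apply continuous_sqrt_comp, (continuous_sumR d (fun k s => F k s ^ 2)).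
  intros k Hk. apply (continuous_ext (fun s => F k s * F k s)); [intros s; exact (Rsqr_pow2 _)|].
  now apply (continuous_mult (F k) (F k) t); apply H.
Qed.

Lemma is_derive_sumR n (F : nat -> R -> R) (F' : nat -> R) t :
  (forall k, (k < n)%nat -> is_derive (F k) t (F' k)) ->
  is_derive (fun s => sumR n (fun k => F k s)) t (sumR n F').
Proof.
  induction n as [|n IH]; intros H.
  - rewrite sumR_0. exact (is_derive_const (0 : R) t).
  - apply (is_derive_ext (fun s => sumR n (fun k => F k s) + F n s)); [intros; now rewrite sumR_S|].
    rewrite sumR_S. apply (is_derive_plus (fun s => sumR n (fun k => F k s)) (F n));
      [apply IH; intros|]; apply H; lia.
Qed.

Lemma is_derive_zero_dominated (f g : R -> R) t :
  (forall s, Rabs (f s - f t) <= Rabs (g s - g t)) -> is_derive g t 0 -> is_derive f t 0.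
Proof.
  intros Hdom Hg. apply is_derive_Reals in Hg. apply is_derive_Reals.
  intros eps Heps. destruct (Hg eps Heps) as [del Hdel]. exists del. intros h Hh0 Hh.
  specialize (Hdel h Hh0 Hh). rewrite Rminus_0_r in *. unfold Rdiv in *. rewrite Rabs_mult in *.
  eapply Rle_lt_trans; [|exact Hdel]. apply Rmult_le_compat_r; [apply Rabs_pos| apply Hdom].
Qed.

Lemma is_derive_Rabs_flat (g : R -> R) t : is_derive g t 0 -> is_derive (fun s => Rabs (g s)) t 0.
Proof. apply is_derive_zero_dominated. intros. apply Rabs_triang_inv2. Qed.

Lemma is_derive_Rmax_same (u w : R -> R) t l :
  is_derive u t l -> is_derive w t l -> is_derive (fun s => Rmax (u s) (w s)) t l.
Proof.
  intros Hu Hw. apply (is_derive_ext (fun s => / 2 * (u s + w s + Rabs (u s - w s)))).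
  { intros s. exact (eq_sym (Rmax_half_sum _ _)). }
  replace l with (/ 2 * (l + l + 0)) by field. apply is_derive_scal.
  apply (is_derive_plus (fun s => u s + w s)); [now apply (is_derive_plus u w)|].
  apply is_derive_Rabs_flat. replace 0 with (l - l) by ring. now apply (is_derive_minus u w).
Qed.

Definition slack_or_active (M l : R) (u : R -> R) (t : R) : Prop :=
  (continuous u t /\ u t < M) \/ (u t = M /\ is_derive u t l).

Lemma slack_or_active_Rmax M l u w t :
  slack_or_active M l u t -> slack_or_active M l w t ->
  slack_or_active M l (fun s => Rmax (u s) (w s)) t.
Proof.
  assert (Hnear : forall f g : R -> R, continuous f t -> continuous g t -> g t < f t ->
            locally t (fun s => Rmax (f s) (g s) = f s)).
  { intros f g Hf Hg Hlt.
    assert (Hc : continuous (fun s => f s - g s) t) by now apply (continuous_minus f g t).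
    apply (filter_imp (fun s => 0 < f s - g s)); [intros s Hs; apply Rmax_left; lra|].
    apply Hc, (open_gt 0). lra. }
  intros [[Cu Lu]|[Eu Du]] [[Cw Lw]|[Ew Dw]].
  - left. split; [now apply continuous_Rmax| now apply Rmax_lub_lt].
  - right. split; [rewrite Rmax_right; lra|].
    apply (is_derive_ext_loc w); [|exact Dw].
    apply (filter_imp (fun s => Rmax (w s) (u s) = w s)); [intros s Hs; now rewrite Rmax_comm|].
    apply Hnear; [apply (ex_derive_continuous (V := R_NormedModule) w); now exists l|exact Cu|lra].
  - right. split; [rewrite Rmax_left; lra|].
    apply (is_derive_ext_loc u); [|exact Du].
    apply (filter_imp (fun s => Rmax (u s) (w s) = u s)); [intros s Hs; now symmetry|].
    apply Hnear; [apply (ex_derive_continuous (V := R_NormedModule) u); now exists l|exact Cw|lra].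
  - right. split; [rewrite Eu, Ew; apply Rmax_left; lra|]. now apply is_derive_Rmax_same.
Qed.

Lemma slack_or_active_maxR M l n (F : nat -> R -> R) t : (0 < n)%nat ->
  (forall k, (k < n)%nat -> slack_or_active M l (F k) t) ->
  slack_or_active M l (fun s => maxR n (fun k => F k s)) t.
Proof. apply (maxR_closed (fun u => slack_or_active M l u t)). intros. now apply slack_or_active_Rmax. Qed.

Definition simple_zero (g : R -> R) (t : R) : Prop :=
  g t = 0 /\ exists l, l <> 0 /\ is_derive g t l.

Lemma simple_zero_isolated g t : simple_zero g t ->
  exists e, 0 < e /\ forall s, g s = 0 -> Rabs (s - t) < e -> s = t.
Proof.
  intros [H0 [l [Hl Hd]]]. apply is_derive_Reals in Hd.
  assert (Hl2 : 0 < Rabs l / 2) by (pose proof (Rabs_pos_lt l Hl); lra).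
  destruct (Hd _ Hl2) as [del Hdel]. exists del. split; [apply cond_pos|].
  intros s Hs Hst. destruct (Req_dec s t) as [E|E]; [exact E|exfalso].
  specialize (Hdel (s - t)). replace (t + (s - t)) with s in Hdel by ring.
  rewrite Hs, H0 in Hdel.
  replace ((0 - 0) / (s - t) - l) with (- l) in Hdel by (field; intro; apply E; lra).
  rewrite Rabs_Ropp in Hdel. specialize (Hdel ltac:(intro; apply E; lra) Hst). lra.
Qed.

Module Negligible.
Import all_boot all_algebra all_classical all_reals Rstruct Rstruct_topology measure lebesgue_measure.
Local Open Scope classical_set_scope.

Lemma ae_R_mono (P Q : R -> Prop) : (forall t, P t -> Q t) -> ae_R P -> ae_R Q.
Proof. by move=> PQ; apply: negligibleS => t /= nQt /PQ. Qed.

Lemma ae_R_and (P Q : R -> Prop) : ae_R P -> ae_R Q -> ae_R (fun t => P t /\ Q t).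
Proof.
move=> nP nQ; apply: negligibleS (negligibleU nP nQ) => t /= nPQ.
by have [Pt|] := pselect (P t); [right => Qt; apply: nPQ|left].
Qed.

Lemma ae_R_forall_nat (P : nat -> R -> Prop) :
  (forall n, ae_R (P n)) -> ae_R (fun t => forall n, P n t).
Proof.
move=> nP; apply: negligibleS (negligible_bigcup nP) => t /= /existsNP[n nPnt].
by exists n.
Qed.

Lemma countable_negligible (A : set R) : countable A -> (@lebesgue_measure R).-negligible A.
Proof.
move=> cA; have mA : measurable (A : set (measurableTypeR R)).
  by apply: countable_measurable => // t; exact: measurable_set1.
by apply/negligibleP => //; exact: countable_lebesgue_measure0.
Qed.

Lemma countable_isolated (A : set R) :
  (forall t, A t -> exists e, 0 < e /\ forall s, A s -> Rabs (s - t) < e -> s = t) ->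
  countable A.
Proof.
move=> isoA.
pose A_ n := [set t | A t /\ forall s, A s -> Rabs (s - t) < / INR n.+1 -> s = t].
have -> : A = \bigcup_n A_ n.
  apply/seteqP; split => [t At|t [n _ []//]].
  have [e [e0 He]] := isoA t At; have [m [lt_me m0]] := archimed_cor1 e e0.
  exists m.-1 => //; split => // s As; rewrite prednK; last exact/ltP.
  by move=> lt_st; apply: He => //; lra.
(* points of [A_ n] are [1/(n+1)]-separated, so [floor ((n+1) t)] tells them apart *)
apply: bigcup_countable => // n _; apply/countable_injP.
exists (fun t => pickle (Num.floor (t * INR n.+1))).
move=> s t; rewrite !inE => -[As _] [At isoT] /(pcan_inj pickleK) fl_eq.
apply: isoT => //.
have c0 : 0 < INR n.+1 by apply: lt_0_INR; lia.
have floor_bounds (x : R) :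
    Rle (Num.floor x)%:~R%R x /\ Rlt x (Rplus (Num.floor x)%:~R%R 1).
  have /andP[/RleP lo /RltP hi] := Num.Theory.floor_itv x.
  by rewrite intrD in hi.
have floor_dist (x y : R) : Num.floor x = Num.floor y -> Rabs (x - y) < 1.
  move=> fxy; have [x1 x2] := floor_bounds x; have [y1 y2] := floor_bounds y.
  by rewrite fxy in x1 x2; apply: Rabs_def1; lra.
have lt1 := floor_dist _ _ fl_eq.
rewrite -Rmult_minus_distr_r Rabs_mult (Rabs_pos_eq (INR n.+1)) in lt1; last lra.
apply: (Rmult_lt_reg_r (INR n.+1)) => //.
by rewrite Rinv_l; [lra|apply: Rgt_not_eq].
Qed.

Lemma ae_R_not_simple_zero (g : R -> R) : ae_R (fun t => ~ simple_zero g t).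
Proof.
have cZ : countable [set t | simple_zero g t].
  apply: countable_isolated => t Zt; have [e [e0 He]] := simple_zero_isolated _ _ Zt.
  by exists e; split => // s [gs _]; apply: He.
by apply: negligibleS (countable_negligible _ cZ) => t /= /contrapT.
Qed.

End Negligible.

Section DelayedConsensus.

Variables (N d : nat) (sigma tau : R) (psi : R -> R) (x : traj).
Hypotheses (HN : (2 <= N)%nat) (Hsigma : 0 <= sigma) (Hst : sigma <= tau)
  (psi_cont : forall r, 0 <= r ->
     filterlim psi (within (fun s => 0 <= s) (locally r)) (locally (psi r)))
  (psi_pos : forall r, 0 <= r -> 0 < psi r)
  (psi_le1 : forall r, 0 <= r -> psi r <= 1)
  (Hx : is_solution N d psi sigma tau x).

Local Notation a := (acoef N d psi sigma tau x).
Local Notation a_min := (amin N d psi sigma tau x).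
Local Notation f := (rhs N d psi sigma tau x).
Local Notation V := (maxvel N d x).
Local Notation D := (dx N d x).
Local Notation dist i j s := (enorm d (fun k => x i s k - x j s k)).
Local Notation coupling c m s := (if Nat.eqb m c then 0 else a c m s).

Lemma x_is_derive i k s : (i < N)%nat -> (k < d)%nat -> 0 < s ->
  is_derive (fun r => x i r k) s (f i s k).
Proof. intros. now apply Hx. Qed.

Lemma x_continuous i k s : (i < N)%nat -> (k < d)%nat -> - tau < s ->
  continuous (fun r => x i r k) s.
Proof.
  intros Hi Hk Hs P HP. destruct Hx as [Hc _].
  assert (Hnear : locally s (fun r => - tau < r)) by (apply (open_gt (- tau)); exact Hs).
  assert (Hw := Hc i k Hi Hk s ltac:(lra) P HP). unfold filtermap, within in Hw |- *.
  generalize (filter_and _ _ Hw Hnear).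
  apply filter_imp. intros r [H1 H2]. apply H1. lra.
Qed.

Lemma x_shift_continuous i k c s : (i < N)%nat -> (k < d)%nat -> - tau < s - c ->
  continuous (fun r => x i (r - c) k) s.
Proof.
  intros Hi Hk Hs. apply (continuous_comp (fun r => r - c) (fun r => x i r k)).
  - apply (continuous_minus (fun r => r) (fun _ => c) s); [apply continuous_id|apply continuous_const].
  - now apply x_continuous.
Qed.

Lemma acoef_continuous i j s : (i < N)%nat -> (j < N)%nat -> 0 < s ->
  continuous (fun r => a i j r) s.
Proof.
  intros Hi Hj Hs. unfold acoef.
  apply (continuous_mult (fun _ => / INR (N - 1))); [apply continuous_const|].
  set (g := fun r => enorm d (fun k => x i (r - sigma) k - x j (r - tau) k)).
  assert (Hg : continuous g s).
  { apply (continuous_enorm d (fun k r => x i (r - sigma) k - x j (r - tau) k)). intros k Hk.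
    apply (continuous_minus (fun r => x i (r - sigma) k) (fun r => x j (r - tau) k) s);
      apply x_shift_continuous; auto; lra. }
  apply (filterlim_comp _ _ _ g psi _ (within (fun r => 0 <= r) (locally (g s)))).
  - intros P HP. apply Hg in HP. apply (filter_imp _ _ (fun r H => H (enorm_nonneg _ _)) HP).
  - apply psi_cont, enorm_nonneg.
Qed.

Lemma rhs_continuous i k s : (i < N)%nat -> (k < d)%nat -> 0 < s ->
  continuous (fun r => f i r k) s.
Proof.
  intros Hi Hk Hs. apply (continuous_sumR N (fun j r => if Nat.eqb j i then 0
    else a i j r * (x j (r - tau) k - x i (r - sigma) k))).
  intros j Hj. destruct (Nat.eqb j i); [apply continuous_const|].
  apply (continuous_mult (fun r => a i j r)); [now apply acoef_continuous|].
  apply (continuous_minus (fun r => x j (r - tau) k) (fun r => x i (r - sigma) k) s);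
    apply x_shift_continuous; auto; lra.
Qed.

Lemma acoef_nonneg i j s : 0 <= a i j s.
Proof.
  apply Rmult_le_pos; [left; apply Rinv_0_lt_compat, lt_0_INR; lia|].
  left. apply psi_pos, enorm_nonneg.
Qed.

Lemma amin_le_acoef i j s : (i < N)%nat -> (j < N)%nat -> a_min s <= a i j s.
Proof.
  intros Hi Hj. eapply Rle_trans; [apply (minR_lb N _ i Hi)|].
  apply (minR_lb N (fun j => a i j s) j Hj).
Qed.

Lemma coupling_sum_le1 c s : (c < N)%nat -> sumR N (fun m => coupling c m s) <= 1.
Proof.
  intros Hc. assert (HN1 : 0 < INR (N - 1)) by (apply lt_0_INR; lia).
  eapply Rle_trans.
  - apply (sumR_le N _ (fun m => / INR (N - 1) * (if Nat.eqb m c then 0 else 1))).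
    intros m _. destruct (Nat.eqb m c); [lra|].
    unfold acoef. apply Rmult_le_compat_l; [left; now apply Rinv_0_lt_compat| apply psi_le1, enorm_nonneg].
  - rewrite sumR_scal, sumR_offdiag_one by exact Hc.
    rewrite minus_INR in * by lia. simpl INR in *. right. field. lra.
Qed.

Lemma coupling_nonneg c m s : 0 <= coupling c m s.
Proof. destruct (Nat.eqb m c); [lra| apply acoef_nonneg]. Qed.

Lemma dot_rhs w c s : dot d w (f c s) =
  sumR N (fun m => coupling c m s * dot d w (fun k => x m (s - tau) k - x c (s - sigma) k)).
Proof.
  unfold dot, rhs.
  transitivity (sumR d (fun k => sumR N (fun m => w k * (if Nat.eqb m c then 0 else
     a c m s * (x m (s - tau) k - x c (s - sigma) k))))).
  { apply sumR_ext. intros k _. now rewrite sumR_scal. }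
  rewrite sumR_swap. apply sumR_ext. intros m _. rewrite <- sumR_scal.
  apply sumR_ext. intros k _. destruct (Nat.eqb m c); ring.
Qed.

Lemma maxvel_eq s : 0 < s -> V s = maxR N (fun l => enorm d (f l s)).
Proof.
  intros Hs. apply maxR_ext; [|lia]. intros l Hl. unfold enorm. f_equal.
  apply sumR_ext. intros k Hk. cbv beta. f_equal.
  now apply is_derive_unique, x_is_derive.
Qed.

Lemma maxvel_continuous s : 0 < s -> continuous V s.
Proof.
  intros Hs. apply (continuous_ext_loc _ (fun r => maxR N (fun l => enorm d (f l r)))).
  - apply (filter_imp (fun r => 0 < r)); [intros r Hr; symmetry; now apply maxvel_eq|].
    now apply (open_gt 0).
  - apply (continuous_maxR N (fun l r => enorm d (f l r))); [lia|].
    intros l Hl. apply (continuous_enorm d (fun k r => f l r k)). intros. now apply rhs_continuous.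
Qed.

Lemma maxvel_nonneg s : 0 <= V s.
Proof. apply maxR_nonneg; [lia|]. intros. apply enorm_nonneg. Qed.

Lemma ex_RInt_maxvel p q : 0 < p -> p <= q -> ex_RInt V p q.
Proof.
  intros Hp Hpq. apply (ex_RInt_continuous (V := R_CompleteNormedModule)). intros z Hz.
  rewrite Rmin_left in Hz by lra. apply maxvel_continuous. lra.
Qed.

Lemma RInt_maxvel_nonneg p q : 0 < p -> p <= q -> 0 <= RInt V p q.
Proof. intros. apply RInt_ge_0; auto using ex_RInt_maxvel, maxvel_nonneg. Qed.

Lemma RInt_maxvel_mono p c e q : 0 < p -> p <= c -> c <= e -> e <= q ->
  RInt V c e <= RInt V p q.
Proof.
  intros Hp H1 H2 H3.
  rewrite <- (RInt_Chasles V p c q), <- (RInt_Chasles V c e q) by (apply ex_RInt_maxvel; lra).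
  pose proof (RInt_maxvel_nonneg p c Hp H1). pose proof (RInt_maxvel_nonneg e q ltac:(lra) H3).
  change (plus (RInt V p c) (plus (RInt V c e) (RInt V e q)))
    with (RInt V p c + (RInt V c e + RInt V e q)). lra.
Qed.

Lemma dx_nonneg s : 0 <= D s.
Proof.
  apply maxR_nonneg; [lia|]. intros. apply maxR_nonneg; [lia|]. intros. apply enorm_nonneg.
Qed.

Lemma dx_continuous s : - tau < s -> continuous D s.
Proof.
  intros Hs. apply (continuous_maxR N (fun i r => maxR N (fun j => dist i j r))); [lia|].
  intros i Hi. apply (continuous_maxR N (fun j r => dist i j r)); [lia|].
  intros j Hj. apply (continuous_enorm d (fun k r => x i r k - x j r k)). intros k Hk.
  apply (continuous_minus (fun r => x i r k) (fun r => x j r k) s); now apply x_continuous.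
Qed.

Lemma dist_le_dx i j s : (i < N)%nat -> (j < N)%nat -> dist i j s <= D s.
Proof.
  intros Hi Hj. eapply Rle_trans; [| apply (maxR_ub N _ i Hi)].
  apply (maxR_ub N (fun j => dist i j s) j Hj).
Qed.

Lemma dx_attained s : exists i j, (i < N)%nat /\ (j < N)%nat /\ D s = dist i j s.
Proof.
  destruct (maxR_attained N (fun i => maxR N (fun j => dist i j s)) ltac:(lia)) as [i [Hi Ei]].
  destruct (maxR_attained N (fun j => dist i j s) ltac:(lia)) as [j [Hj Ej]].
  exists i, j. unfold dx. rewrite Ei, Ej. auto.
Qed.

Lemma displacement_bound w l p q : enorm d w <= 1 -> (l < N)%nat -> 0 < p -> p <= q ->
  Rabs (dot d w (fun k => x l q k - x l p k)) <= RInt V p q.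
Proof.
  intros Hw Hl Hp Hpq.
  set (g := fun s => dot d w (x l s)).
  assert (HI : is_RInt (fun s => dot d w (f l s)) p q (minus (g q) (g p))).
  { apply (is_RInt_derive (V := R_CompleteNormedModule)).
    - intros z Hz. rewrite Rmin_left in Hz by lra.
      apply (is_derive_sumR d (fun k s => w k * x l s k) (fun k => w k * f l z k)).
      intros k Hk. apply is_derive_scal, x_is_derive; auto; lra.
    - intros z Hz. rewrite Rmin_left in Hz by lra.
      apply (continuous_sumR d (fun k s => w k * f l s k)). intros k Hk.
      apply (continuous_mult (fun _ => w k)); [apply continuous_const| apply rhs_continuous; auto; lra]. }
  replace (dot d w (fun k => x l q k - x l p k)) with (minus (g q) (g p))
    by (unfold g; rewrite dot_minus_r; reflexivity).
  change (norm (minus (g q) (g p)) <= RInt V p q).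
  apply (norm_RInt_le (V := R_CompleteNormedModule) (fun s => dot d w (f l s)) V p q _ _ Hpq); [|exact HI|].
  2: { apply (RInt_correct (V := R_CompleteNormedModule)). now apply ex_RInt_maxvel. }
  intros z Hz. change (norm (dot d w (f l z))) with (Rabs (dot d w (f l z))).
  rewrite maxvel_eq by lra.
  eapply Rle_trans; [apply Rabs_dot_le|].
  eapply Rle_trans; [| apply (maxR_ub N (fun l => enorm d (f l z)) l Hl)].
  pose proof (enorm_nonneg d (f l z)). pose proof (enorm_nonneg d w). nra.
Qed.

Lemma maxvel_bound s : tau < s -> V s <= D (s - tau) + RInt V (s - tau) s.
Proof.
  intros Hs. set (B := D (s - tau) + RInt V (s - tau) s).
  assert (HB : 0 <= B).
  { pose proof (dx_nonneg (s - tau)). pose proof (RInt_maxvel_nonneg (s - tau) s ltac:(lra) ltac:(lra)).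
    unfold B. lra. }
  rewrite maxvel_eq by lra.
  destruct (maxR_attained N (fun l => enorm d (f l s)) ltac:(lia)) as [l [Hl ->]].
  destruct (Rle_lt_or_eq_dec 0 _ (enorm_nonneg d (f l s))) as [Hpos|Hz]; [|rewrite <- Hz; exact HB].
  destruct (enorm_normalize d _ Hpos) as [He Hdot].
  set (e := fun k => f l s k / enorm d (f l s)) in *.
  rewrite <- Hdot, dot_rhs.
  apply Rle_trans with (sumR N (fun m => coupling l m s * B)).
  - apply sumR_le. intros m Hm. apply Rmult_le_compat_l; [apply coupling_nonneg|].
    (* split the delayed difference at the agent's own delayed position *)
    rewrite (dot_ext d e e _ (fun k => (x m (s - tau) k - x l (s - tau) k)
                                  - (x l (s - sigma) k - x l (s - tau) k)))
      by (intros; split; ring).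
    rewrite dot_minus_r.
    pose proof (Rle_abs (dot d e (fun k => x m (s - tau) k - x l (s - tau) k))) as H1.
    pose proof (Rabs_dot_le d e (fun k => x m (s - tau) k - x l (s - tau) k)) as H2.
    pose proof (dist_le_dx m l (s - tau) Hm Hl) as H3.
    pose proof (displacement_bound e l (s - tau) (s - sigma) ltac:(lra) Hl ltac:(lra) ltac:(lra)) as H4.
    apply Rabs_le_between in H4.
    pose proof (RInt_maxvel_mono (s - tau) (s - tau) (s - sigma) s ltac:(lra) ltac:(lra) ltac:(lra) ltac:(lra)).
    rewrite He in H2. unfold B. lra.
  - rewrite (sumR_ext N _ (fun m => B * coupling l m s)) by (intros; ring).
    rewrite sumR_scal. pose proof (coupling_sum_le1 l s Hl).
    pose proof (sumR_nonneg N (fun m => coupling l m s) (fun m _ => coupling_nonneg l m s)). nra.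
Qed.

Lemma drift_bound w c t : enorm d w <= 1 -> (c < N)%nat -> tau < t ->
  (forall m, (m < N)%nat -> dot d w (fun k => x m t k - x c t k) <= 0) ->
  dot d w (f c t) <=
    a_min t * sumR N (fun m => dot d w (fun k => x m t k - x c t k)) + 2 * RInt V (t - tau) t.
Proof.
  intros Hw Hc Ht Hneg. rewrite dot_rhs.
  set (I := RInt V (t - tau) t).
  assert (HI : 0 <= I) by (apply RInt_maxvel_nonneg; lra).
  apply Rle_trans with (sumR N (fun m => a_min t * dot d w (fun k => x m t k - x c t k)
                                         + 2 * I * coupling c m t)).
  - apply sumR_le. intros m Hm. destruct (Nat.eqb_spec m c) as [->|Hmc].
    + rewrite !dot_minus_r. nra.
    + assert (Hdelay : dot d w (fun k => x m (t - tau) k - x c (t - sigma) k)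
                       <= dot d w (fun k => x m t k - x c t k) + 2 * I).
      { pose proof (displacement_bound w m (t - tau) t Hw Hm ltac:(lra) ltac:(lra)) as H1.
        pose proof (displacement_bound w c (t - sigma) t Hw Hc ltac:(lra) ltac:(lra)) as H2.
        pose proof (RInt_maxvel_mono (t - tau) (t - sigma) t t ltac:(lra) ltac:(lra) ltac:(lra) ltac:(lra))
          as H3.
        apply Rabs_le_between in H1, H2. rewrite !dot_minus_r in *. fold I in H1, H3. lra. }
      pose proof (Hneg m Hm). pose proof (amin_le_acoef c m t Hc Hm). pose proof (acoef_nonneg c m t).
      nra.
  - rewrite sumR_plus, sumR_scal, sumR_scal. pose proof (coupling_sum_le1 c t Hc). nra.
Qed.

Lemma extremal_pair_bound i j t : (i < N)%nat -> (j < N)%nat -> tau < t ->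
  0 < D t -> dist i j t = D t ->
  dot d (fun k => x i t k - x j t k) (fun k => f i t k - f j t k) / D t <=
  4 * RInt V (t - tau) t - INR N * a_min t * D t.
Proof.
  intros Hi Hj Ht HM Hij.
  replace (dot d (fun k => x i t k - x j t k) (fun k => f i t k - f j t k) / D t)
    with (dot d (fun k => (x i t k - x j t k) / D t) (fun k => f i t k - f j t k)).
  2: { unfold Rdiv. rewrite Rmult_comm, <- dot_scal_l. apply dot_ext. intros; split; [ring|reflexivity]. }
  destruct (enorm_normalize d (fun k => x i t k - x j t k) ltac:(lra)) as [He Hdot].
  rewrite Hij in He, Hdot.
  set (e := fun k => (x i t k - x j t k) / D t) in *.
  rewrite dot_minus_r in Hdot |- *.
  assert (Hproj : forall m, (m < N)%nat -> forall r, (r < N)%nat ->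
            dot d e (x m t) - dot d e (x r t) <= D t).
  { intros m Hm r Hr. rewrite <- dot_minus_r.
    pose proof (dot_le_enorm d e (fun k => x m t k - x r t k)). rewrite He in H.
    pose proof (dist_le_dx m r t Hm Hr). lra. }
  assert (Si : dot d e (f i t) <=
     a_min t * sumR N (fun m => dot d e (fun k => x m t k - x i t k)) + 2 * RInt V (t - tau) t).
  { apply drift_bound; auto; [lra|]. intros m Hm. rewrite dot_minus_r.
    pose proof (Hproj m Hm j Hj). lra. }
  assert (Sj : dot d (fun k => - e k) (f j t) <=
     a_min t * sumR N (fun m => dot d (fun k => - e k) (fun k => x m t k - x j t k))
     + 2 * RInt V (t - tau) t).
  { apply drift_bound; auto; [rewrite enorm_opp; lra|]. intros m Hm.
    rewrite dot_opp_l, dot_minus_r. pose proof (Hproj i Hi m Hm). lra. }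
  (* summed over m, the two drifts pull the extremal pair together by N times its distance *)
  assert (Hsum : sumR N (fun m => dot d e (fun k => x m t k - x i t k))
               + sumR N (fun m => dot d (fun k => - e k) (fun k => x m t k - x j t k))
               = - (INR N * D t)).
  { rewrite <- sumR_plus, (sumR_ext N _ (fun _ => - D t)), sumR_const; [ring|].
    intros m _. rewrite dot_opp_l, !dot_minus_r. lra. }
  rewrite dot_opp_l in Sj.
  assert (a_min t * sumR N (fun m => dot d e (fun k => x m t k - x i t k))
          + a_min t * sumR N (fun m => dot d (fun k => - e k) (fun k => x m t k - x j t k))
          = - (INR N * a_min t * D t)) by (rewrite <- Rmult_plus_distr_l, Hsum; ring).
  lra.
Qed.

Lemma RInt_maxvel_bound t : 2 * tau < t ->
  RInt V (t - tau) t <= RInt (fun s => D (s - tau)) (t - tau) t + tau * RInt V (t - 2 * tau) t.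
Proof.
  intros Ht.
  assert (Ex : ex_RInt (fun s => D (s - tau)) (t - tau) t).
  { apply (ex_RInt_continuous (V := R_CompleteNormedModule)). intros z Hz.
    rewrite Rmin_left in Hz by lra.
    apply (continuous_comp (fun r => r - tau) D).
    - apply (continuous_minus (fun r => r) (fun _ => tau) z); [apply continuous_id|apply continuous_const].
    - apply dx_continuous. lra. }
  set (J := RInt V (t - 2 * tau) t).
  apply Rle_trans with (RInt (fun s => D (s - tau) + J) (t - tau) t).
  - apply RInt_le; [lra| apply ex_RInt_maxvel; lra| |].
    + apply (ex_RInt_plus (V := R_CompleteNormedModule)); [exact Ex| apply ex_RInt_const].
    + intros s Hs. eapply Rle_trans; [apply maxvel_bound; lra|].
      apply Rplus_le_compat_l. apply RInt_maxvel_mono; lra.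
  - rewrite (RInt_plus (V := R_CompleteNormedModule)); [|exact Ex| apply ex_RInt_const].
    rewrite RInt_const.
    change (RInt (fun s => D (s - tau)) (t - tau) t + (t - (t - tau)) * J
            <= RInt (fun s => D (s - tau)) (t - tau) t + tau * J).
    right. ring.
Qed.

Definition sqdist i j s := sumR d (fun k => (x i s k - x j s k) ^ 2).

Lemma sqdist_dist i j s : sqdist i j s = dist i j s * dist i j s.
Proof.
  symmetry. apply sqrt_sqrt. apply sumR_nonneg. intros. apply pow2_ge_0.
Qed.

Lemma sqdist_is_derive i j t : (i < N)%nat -> (j < N)%nat -> 0 < t ->
  is_derive (sqdist i j) t (2 * dot d (fun k => x i t k - x j t k) (fun k => f i t k - f j t k)).
Proof.
  intros Hi Hj Ht. unfold dot. rewrite <- sumR_scal.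
  apply (is_derive_sumR d (fun k s => (x i s k - x j s k) ^ 2)). intros k Hk.
  assert (Hd : is_derive (fun s => x i s k - x j s k) t (f i t k - f j t k)).
  { apply (is_derive_minus (fun s => x i s k) (fun s => x j s k)); now apply x_is_derive. }
  pose proof (is_derive_pow _ 2 t _ Hd) as H. simpl in H.
  replace (2 * ((x i t k - x j t k) * (f i t k - f j t k)))
    with ((1 + 1) * (f i t k - f j t k) * ((x i t k - x j t k) * 1)) by ring.
  exact H.
Qed.

Lemma dist_is_derive i j t : (i < N)%nat -> (j < N)%nat -> 0 < t -> 0 < dist i j t ->
  is_derive (fun s => dist i j s) t
    (dot d (fun k => x i t k - x j t k) (fun k => f i t k - f j t k) / dist i j t).
Proof.
  intros Hi Hj Ht Hpos.
  change (dist i j t) with (sqrt (sqdist i j t)) in *.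
  assert (Hsq : 0 < sqdist i j t) by (rewrite <- sqrt_0 in Hpos; now apply sqrt_lt_0_alt).
  pose proof (is_derive_sqrt _ t _ (sqdist_is_derive i j t Hi Hj Ht) Hsq) as H.
  replace (dot d (fun k => x i t k - x j t k) (fun k => f i t k - f j t k) / sqrt (sqdist i j t))
    with (2 * dot d (fun k => x i t k - x j t k) (fun k => f i t k - f j t k)
          / (2 * sqrt (sqdist i j t))) by (field; lra).
  exact H.
Qed.

Definition regular_time t : Prop :=
  (forall i j i' j', ~ simple_zero (fun s => sqdist i j s - sqdist i' j' s) t) /\
  (forall i j k, ~ simple_zero (fun s => x i s k - x j s k) t).

Lemma dx_is_derive_of_pairs t L :
  (forall i j, (i < N)%nat -> (j < N)%nat -> slack_or_active (D t) L (fun s => dist i j s) t) ->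
  is_derive D t L.
Proof.
  intros Hpairs.
  destruct (slack_or_active_maxR (D t) L N (fun i s => maxR N (fun j => dist i j s)) t ltac:(lia))
    as [[_ Hlt]|[_ HD]]; [| |exact HD].
  - intros i Hi. apply (slack_or_active_maxR (D t) L N (fun j s => dist i j s) t); [lia|].
    intros j Hj. now apply Hpairs.
  - exfalso. exact (Rlt_irrefl _ Hlt).
Qed.

Lemma dx_is_derive_pos t i0 j0 : 0 < t -> regular_time t -> 0 < D t ->
  (i0 < N)%nat -> (j0 < N)%nat -> dist i0 j0 t = D t ->
  is_derive D t (dot d (fun k => x i0 t k - x j0 t k) (fun k => f i0 t k - f j0 t k) / D t).
Proof.
  intros Ht [Hties _] HM Hi0 Hj0 Hmax. apply dx_is_derive_of_pairs. intros i j Hi Hj.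
  destruct (Rle_lt_or_eq_dec _ _ (dist_le_dx i j t Hi Hj)) as [Hlt|Heq].
  - left. split; [|exact Hlt]. apply (continuous_enorm d (fun k s => x i s k - x j s k)).
    intros k Hk. apply (continuous_minus (fun s => x i s k) (fun s => x j s k) t);
      apply x_continuous; auto; lra.
  - right. split; [exact Heq|].
    (* a tie with the extremal pair must have the same slope, else it is a simple zero *)
    assert (Hslope : dot d (fun k => x i t k - x j t k) (fun k => f i t k - f j t k)
                   = dot d (fun k => x i0 t k - x j0 t k) (fun k => f i0 t k - f j0 t k)).
    { destruct (Req_dec (dot d (fun k => x i t k - x j t k) (fun k => f i t k - f j t k)
        - dot d (fun k => x i0 t k - x j0 t k) (fun k => f i0 t k - f j0 t k)) 0) as [E|Hne];
        [lra|exfalso].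
      apply (Hties i j i0 j0). split.
      - rewrite !sqdist_dist, Heq, Hmax. ring.
      - eexists. split; [|apply (is_derive_minus (sqdist i j) (sqdist i0 j0));
                           now apply sqdist_is_derive].
        change (2 * dot d (fun k => x i t k - x j t k) (fun k => f i t k - f j t k)
              - 2 * dot d (fun k => x i0 t k - x j0 t k) (fun k => f i0 t k - f j0 t k) <> 0).
        lra. }
    rewrite <- Hslope, <- Heq. apply dist_is_derive; auto. lra.
Qed.

Lemma dx_is_derive_zero t : 0 < t -> regular_time t -> D t = 0 -> is_derive D t 0.
Proof.
  intros Ht [_ Hcross] HM. apply dx_is_derive_of_pairs. intros i j Hi Hj.
  assert (Hz : dist i j t = 0).
  { pose proof (dist_le_dx i j t Hi Hj). pose proof (enorm_nonneg d (fun k => x i t k - x j t k)).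
    lra. }
  pose proof (enorm_eq0 d _ Hz) as Hcomp. cbv beta in Hcomp.
  right. split; [lra|].
  set (g := fun s => sumR d (fun k => Rabs (x i s k - x j s k))).
  assert (Hg0 : g t = 0).
  { unfold g. rewrite (sumR_ext d _ (fun _ => 0)), sumR_const; [ring|].
    intros k Hk. rewrite Hcomp by exact Hk. apply Rabs_R0. }
  apply (is_derive_zero_dominated _ g).
  { intros s. rewrite Hz, Hg0, !Rminus_0_r, Rabs_pos_eq by apply enorm_nonneg.
    eapply Rle_trans; [apply enorm_le_sum_abs| apply Rle_abs]. }
  replace 0 with (sumR d (fun _ => 0)) by (rewrite sumR_const; ring).
  apply (is_derive_sumR d (fun k s => Rabs (x i s k - x j s k))). intros k Hk.
  apply is_derive_Rabs_flat.
  (* a coordinate difference vanishing at t with nonzero slope would be a simple zero *)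
  destruct (Req_dec (f i t k - f j t k) 0) as [E|Hne].
  - rewrite <- E. apply (is_derive_minus (fun s => x i s k) (fun s => x j s k)); now apply x_is_derive.
  - exfalso. apply (Hcross i j k). split; [now apply Hcomp|].
    exists (f i t k - f j t k). split; [exact Hne|].
    apply (is_derive_minus (fun s => x i s k) (fun s => x j s k)); now apply x_is_derive.
Qed.

Lemma dx_derivative_bound t : 2 * tau < t -> regular_time t ->
  ex_derive D t /\
  Derive D t <= 4 * RInt (fun s => D (s - tau)) (t - tau) t + 4 * tau * RInt V (t - 2 * tau) t
                - INR N * a_min t * D t.
Proof.
  intros Ht Hreg.
  assert (HL : exists L, is_derive D t L /\ L <= 4 * RInt V (t - tau) t - INR N * a_min t * D t).
  { destruct (Rle_lt_or_eq_dec 0 (D t) (dx_nonneg t)) as [HM|HM].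
    - destruct (dx_attained t) as [i [j [Hi [Hj Hij]]]].
      eexists. split; [apply (dx_is_derive_pos t i j); auto; lra|].
      apply extremal_pair_bound; auto; lra.
    - exists 0. split; [apply dx_is_derive_zero; auto; lra|].
      rewrite <- HM, Rmult_0_r. pose proof (RInt_maxvel_nonneg (t - tau) t ltac:(lra) ltac:(lra)). lra. }
  destruct HL as [L [HD HLe]]. split; [now exists L|]. rewrite (is_derive_unique _ _ _ HD).
  pose proof (RInt_maxvel_bound t Ht). assert (0 <= tau) by lra. nra.
Qed.

End DelayedConsensus.

Theorem corollary3p3
  (N d : nat) (HN : (2 <= N)%nat) (Hd : (1 <= d)%nat)
  (sigma tau : R) (Hsigma : 0 <= sigma) (Hst : sigma <= tau)
  (psi : R -> R)
  (psi_cont : forall r, 0 <= r ->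
     filterlim psi (within (fun s => 0 <= s) (locally r)) (locally (psi r)))
  (psi_noninc : forall r s, 0 <= r -> r <= s -> psi s <= psi r)
  (psi_pos : forall r, 0 <= r -> 0 < psi r)
  (psi_le1 : forall r, 0 <= r -> psi r <= 1)
  (x : traj) (Hx : is_solution N d psi sigma tau x) :
  ae_R (fun t => 2 * tau < t ->
    ex_derive (dx N d x) t /\
    Derive (dx N d x) t <=
      4 * RInt (fun s => dx N d x (s - tau)) (t - tau) t
      + 4 * tau * RInt (fun r => maxvel N d x r) (t - 2 * tau) t
      - INR N * amin N d psi sigma tau x t * dx N d x t).
Proof.
  apply (Negligible.ae_R_mono (regular_time d x)).
  - intros t Hreg Ht.
    exact (dx_derivative_bound N d sigma tau psi x HN Hsigma Hst psi_cont psi_pos psi_le1 Hx t Ht Hreg).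
  - apply Negligible.ae_R_and; repeat (apply Negligible.ae_R_forall_nat; intros);
      apply Negligible.ae_R_not_simple_zero.
Qed.
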